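(* If $n\ge 1$, $k\ge 3$ and $t$ is a vertex of the $k$-Pell graph $\Pi_{n,k}$, then $$\deg(t)=|t|_0+2\sum_{i=1}^{k-1}|t|_i+\frac12|t|_k-r,$$ where $r$ is the number of maximal runs of the letter $k-1$ in $t$.
   Context: For an integer $k\ge 2$, a $k$-Pell string is a finite word over the alphabet $\{0,1,\ldots,k-1,kk\}$, i.e. a word over $\{0,1,\ldots,k\}$ in which every maximal run of the letter $k$ has even length. For $n\ge 0$, the $k$-Pell graph $\Pi_{n,k}$ has as vertices all $k$-Pell strings of length $n$, and two vertices are adjacent if one is obtained from the other either by replacing a single letter $i$ by $i+1$ (or vice versa) for some $i\in\{0,1,\ldots,k-2\}$, or by replacing one factor $(k-1)(k-1)$ by $kk$ (or vice versa), in such a way that the resulting string is again a $k$-Pell string. For a word $t$ and a letter $i$, $|t|_i$ denotes the number of occurrences of $i$ in $t$. *)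

(* Words are sequences of naturals; letters are 0..k. *)
From mathcomp Require Import all_boot all_order all_algebra.
Set Implicit Arguments. Unset Strict Implicit. Unset Printing Implicit Defensive.

(* k-Pell string: a word over the alphabet {0,...,k-1, kk}. *)
Fixpoint pell (k : nat) (t : seq nat) : bool :=
  match t with
  | [::] => true
  | a :: s =>
      if a < k then pell k s
      else if a == k then
        match s with
        | b :: s' => (b == k) && pell k s'
        | [::] => false
        end
      else false
  end.

Fixpoint words (k n : nat) : seq (seq nat) :=
  match n with
  | 0 => [:: [::]]
  | n'.+1 => [seq a :: w | a <- iota 0 k.+1, w <- words k n']
  end.

Definition pell_vertices (n k : nat) : seq (seq nat) :=
  [seq u <- words k n | pell k u].

Definition single_step (k : nat) (t u : seq nat) : bool :=
  (size t == size u) &&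
  has (fun i =>
         [&& all (fun j => (j == i) || (nth 0 t j == nth 0 u j)) (iota 0 (size t)),
             ((nth 0 t i).+1 == nth 0 u i) || ((nth 0 u i).+1 == nth 0 t i),
             nth 0 t i < k & nth 0 u i < k])
      (iota 0 (size t)).

Definition pair_step (k : nat) (t u : seq nat) : bool :=
  (size t == size u) &&
  has (fun i =>
         [&& i.+1 < size t,
             all (fun j => (j == i) || (j == i.+1) || (nth 0 t j == nth 0 u j))
                 (iota 0 (size t)),
             nth 0 t i == k.-1, nth 0 t i.+1 == k.-1,
             nth 0 u i == k & nth 0 u i.+1 == k])
      (iota 0 (size t)).

Definition pell_adj (k : nat) (t u : seq nat) : bool :=
  [|| single_step k t u, pair_step k t u | pair_step k u t].

Definition pell_deg (n k : nat) (t : seq nat) : nat :=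
  count (pell_adj k t) (pell_vertices n k).

Definition runs_of (a : nat) (t : seq nat) : nat :=
  count (fun i => (nth 0 t i == a) && ((i == 0) || (nth 0 t i.-1 != a)))
        (iota 0 (size t)).

(* Count the neighbours of a k-Pell string t position by position.  A letter 0
   can only be raised and a letter k-1 (as a single letter) only lowered, a
   letter in 1..k-2 can move both ways, and each block kk can only become
   (k-1)(k-1): this gives |t|_0 + 2 (|t|_1 + ... + |t|_{k-1}) - |t|_{k-1}
   + |t|_k/2 neighbours.  The remaining ones replace a factor (k-1)(k-1) by kk;
   a maximal run of k-1 of length L contains L-1 such factors, so there are
   |t|_{k-1} - r of them.  Concretely, the neighbours are listed without
   repetition by a recursion on t that mirrors this count.  The argument only
   uses k >= 2 (so that 0 <> k-1), and n >= 1 is not needed. *)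

From mathcomp Require Import all_boot all_order all_algebra zify.
Import GRing.Theory.

Lemma iota1 n : iota 1 n = map S (iota 0 n).
Proof. by rewrite -[1]/(1 + 0) iotaDl. Qed.

Lemma all_nth_iota_eq (s s' : seq nat) : size s = size s' ->
  all (fun j => nth 0 s j == nth 0 s' j) (iota 0 (size s)) = (s == s').
Proof.
move=> eq_size; apply/allP/eqP => [eq_nth|-> //].
by apply: (eq_from_nth (x0 := 0)) => // i lt_i; apply/eqP/eq_nth; rewrite mem_iota.
Qed.

Lemma mem_map_cons (T : eqType) (a b : T) (L : seq (seq T)) s :
  (b :: s \in map (cons a) L) = (b == a) && (s \in L).
Proof.
by apply/mapP/andP => [[w w_in [-> ->]]|[/eqP-> s_in]]; [rewrite eqxx | exists s].
Qed.

Lemma mem_map_cons_tail (T : eqType) (L : seq T) s b s' :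
  (b :: s' \in [seq x :: s | x <- L]) = (s' == s) && (b \in L).
Proof.
by apply/mapP/andP => [[x x_in [-> ->]]|[/eqP-> b_in]]; [rewrite eqxx | exists b].
Qed.

Lemma runs_of_cons c a s :
  runs_of c (a :: s) + ((a == c) && (ohead s == Some c)) = (a == c) + runs_of c s.
Proof.
rewrite /runs_of /= andbT iota1 count_map.
case: s => [|d r] /=; first by rewrite andbF !addn0.
rewrite iota1 !count_map (inj_eq Some_inj).
by case: (a == c); case: (d == c); rewrite /= ?addn0 ?add0n // addnAC.
Qed.

Lemma sum_count_mem_cons m n a (s : seq nat) :
  \sum_(m <= i < n) count_mem i (a :: s) = (m <= a < n) + \sum_(m <= i < n) count_mem i s.
Proof.
rewrite big_split /= -big_mkcond sum1_count (eq_count (a2 := pred1 a)) => [|i]; last exact: eq_sym.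
by rewrite count_uniq_mem ?iota_uniq // mem_index_iota.
Qed.

Section Steps.
Variable k : nat.

Definition letter_step a b := [&& (a.+1 == b) || (b.+1 == a), a < k & b < k].

Fixpoint single_step_rec (t u : seq nat) : bool :=
  match t, u with
  | a :: s, b :: s' => ((s == s') && letter_step a b) || ((a == b) && single_step_rec s s')
  | _, _ => false
  end.

Definition pair_head (t u : seq nat) : bool :=
  if (t, u) is ([:: a, c & r], [:: b, d & r']) then
    [&& a == k.-1, c == k.-1, b == k, d == k & r == r']
  else false.

Fixpoint pair_step_rec (t u : seq nat) : bool :=
  match t, u with
  | a :: s, b :: s' => pair_head t u || ((a == b) && pair_step_rec s s')
  | _, _ => false
  end.

Lemma single_step_rec_size t u : single_step_rec t u -> size t = size u.
Proof.
elim: t u => [|a s IH] [|b s'] //= /orP[/andP[/eqP-> _]|/andP[_ /IH->]] //.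
Qed.

Lemma pair_head_size t u : pair_head t u -> size t = size u.
Proof. by case: t u => [|a [|c r]] [|b [|d r']] //= /and5P[_ _ _ _ /eqP->]. Qed.

Lemma pair_step_rec_size t u : pair_step_rec t u -> size t = size u.
Proof.
elim: t u => [|a s IH] [|b s'] //= /orP[/pair_head_size //|/andP[_ /IH->]] //.
Qed.

Lemma single_stepE t u : single_step k t u = single_step_rec t u.
Proof.
elim: t u => [|a s IH] [|b s'] //.
rewrite /single_step /= eqSS iota1 has_map all_map.
have [eq_size|neq_size] /= := eqVneq (size s) (size s'); last first.
  apply/esym/negP => /(@single_step_rec_size (a :: s) (b :: s')) [eq_size].
  by rewrite eq_size eqxx in neq_size.
rewrite (eq_all (a2 := fun j => nth 0 s j == nth 0 s' j)) // all_nth_iota_eq // -IH.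
rewrite /single_step eq_size eqxx /=; congr (_ || _).
by case: (a == b); [apply: eq_has => i /=; rewrite all_map | apply/hasPn].
Qed.

Lemma pair_stepE t u : pair_step k t u = pair_step_rec t u.
Proof.
elim: t u => [|a s IH] [|b s'] //.
rewrite /pair_step /= eqSS iota1 has_map all_map.
have [eq_size|neq_size] /= := eqVneq (size s) (size s'); last first.
  apply/esym/negP => /(@pair_step_rec_size (a :: s) (b :: s')) [eq_size].
  by rewrite eq_size eqxx in neq_size.
rewrite -IH /pair_step eq_size eqxx /=; congr (_ || _).
  case: s s' eq_size {IH} => [|c r] [|d r'] //= [eq_size].
  rewrite -eq_size iota1 all_map.
  rewrite (eq_all (a2 := fun j => nth 0 r j == nth 0 r' j)) // all_nth_iota_eq //.
  by rewrite /pair_head /= andbC -!andbA.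
case: (a == b) => /=; first by apply: eq_has => i /=; rewrite all_map.
by apply/negbTE/hasPn => i _ /=; rewrite andbF.
Qed.

Lemma pell_adj_nil u : pell_adj k [::] u = false.
Proof. by rewrite /pell_adj single_stepE !pair_stepE; case: u. Qed.

Lemma pell_adj_cons a s b s' : pell_adj k (a :: s) (b :: s') =
  [|| (s == s') && letter_step a b, pair_head (a :: s) (b :: s'),
      pair_head (b :: s') (a :: s) | (a == b) && pell_adj k s s'].
Proof.
rewrite /pell_adj !single_stepE !pair_stepE /= [b == a]eq_sym.
case: (a == b); rewrite /= ?orbF //.
by case: (single_step_rec s s'); case: (pair_step_rec s s'); rewrite /= ?orbT ?orbF.
Qed.

Lemma letter_step_irr a : letter_step a a = false.
Proof. by rewrite /letter_step (gtn_eqF (ltnSn a)). Qed.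

Lemma pair_headP t u :
  reflect (exists r, t = [:: k.-1, k.-1 & r] /\ u = [:: k, k & r]) (pair_head t u).
Proof.
apply: (iffP idP) => [|[r [-> ->]]]; last by rewrite /pair_head !eqxx.
case: t u => [|a [|c r]] [|b [|d r']] //= /and5P[/eqP-> /eqP-> /eqP-> /eqP-> /eqP->].
by eexists.
Qed.

Definition pair_up (t : seq nat) : seq (seq nat) :=
  if t is [:: a, c & r] then
    if (a == k.-1) && (c == k.-1) then [:: [:: k, k & r]] else [::]
  else [::].

Lemma mem_pair_up t u : (u \in pair_up t) = pair_head t u.
Proof.
case: t => [|a [|c r]] //; rewrite /pair_up /pair_head.
case: (a == k.-1) (c == k.-1) => [] []; case: u => [|b [|d r']] //=.
all: rewrite inE !eqseq_cons /= ?andbF ?andbT //.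
by rewrite [r' == r]eq_sym.
Qed.

Lemma size_pair_up a s :
  size (pair_up (a :: s)) = (a == k.-1) && (ohead s == Some k.-1).
Proof.
case: s => [|c r] /=; first by case: (a == k.-1).
by rewrite (inj_eq Some_inj); case: (a == k.-1) (c == k.-1) => [] [].
Qed.

End Steps.

Section Words.
Variable k : nat.

Lemma mem_words n u : (u \in words k n) = (size u == n) && all (leq^~ k) u.
Proof.
elim: n u => [|n IH] u; first by case: u.
rewrite [words k n.+1]/words -/words; case: u => [|a s].
  by rewrite [RHS]/=; apply/negbTE/allpairsP => -[[x w] [_ _]].
rewrite [RHS]/= eqSS; apply/allpairsP/andP.
  move=> [[x w] [x_in w_in [-> ->]]].
  by move: x_in w_in; rewrite mem_iota IH ltnS /= => -> /andP[-> ->].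
move=> [size_s /andP[a_le s_le]].
by exists (a, s); rewrite mem_iota ltnS IH size_s a_le s_le.
Qed.

Lemma words_uniq n : uniq (words k n).
Proof.
elim: n => // n IH; rewrite [words k n.+1]/words -/words.
by apply: allpairs_uniq => [||[? ?] [? ?] _ _ [-> ->]] //; apply: iota_uniq.
Qed.

Lemma pell_ind (P : seq nat -> Prop) :
  P [::] ->
  (forall a s, a < k -> pell k s -> P s -> P (a :: s)) ->
  (forall s, pell k s -> P s -> P [:: k, k & s]) ->
  forall t, pell k t -> P t.
Proof.
move=> P_nil P_letter P_kk t.
elim: {t}(size t).+1 {-2}t (ltnSn (size t)) => // m IH [|a s] //= lt_s_m.
case: ltnP => [a_lt_k pell_s|a_ge_k]; first by apply: P_letter; last apply: IH.
case: eqP => // ->; case: s lt_s_m => [|b s] //= lt_s_m /andP[/eqP-> pell_s].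
by apply: P_kk; last apply: IH; rewrite // ltnW.
Qed.

Lemma pell_letters_le t : pell k t -> all (leq^~ k) t.
Proof.
move: t; apply: pell_ind => [|a s /ltnW a_le _ s_le|s _ s_le] //=.
all: by rewrite ?leqnn ?a_le s_le.
Qed.

Lemma mem_pell_vertices n u : (u \in pell_vertices n k) = pell k u && (size u == n).
Proof.
rewrite mem_filter mem_words.
by case pell_u: (pell k u); rewrite //= pell_letters_le // andbT.
Qed.

Lemma pell_vertices_uniq n : uniq (pell_vertices n k).
Proof. exact/filter_uniq/words_uniq. Qed.

End Words.

Section Neighbours.
Variable k : nat.
Hypothesis k_gt1 : 1 < k.

Definition letter_nbrs a :=
  if a == 0 then [:: 1] else if a == k.-1 then [:: k.-2] else [:: a.-1; a.+1].

Fixpoint pell_nbrs (t : seq nat) : seq (seq nat) :=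
  match t with
  | [::] => [::]
  | a :: s =>
      if a < k then
        [seq b :: s | b <- letter_nbrs a] ++ pair_up k t ++ map (cons a) (pell_nbrs s)
      else if s is _ :: s' then
        [:: k.-1, k.-1 & s'] :: map (cons k) (map (cons k) (pell_nbrs s'))
      else [::]
  end.

Lemma pell_nbrs_letter a s : a < k ->
  pell_nbrs (a :: s) =
  [seq b :: s | b <- letter_nbrs a] ++ pair_up k (a :: s) ++ map (cons a) (pell_nbrs s).
Proof. by move=> /= ->. Qed.

Lemma pell_nbrs_kk s :
  pell_nbrs [:: k, k & s] = [:: k.-1, k.-1 & s] :: map (cons k) (map (cons k) (pell_nbrs s)).
Proof. by rewrite /= ltnn. Qed.

Lemma mem_letter_nbrs a b : a < k -> (b \in letter_nbrs a) = letter_step k a b.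
Proof.
rewrite /letter_nbrs /letter_step => a_lt_k.
by case: ifP => [/eqP->|a_neq0]; [|case: ifP => [/eqP->|a_neq_k1]]; rewrite !inE; lia.
Qed.

Lemma letter_nbrs_uniq a : uniq (letter_nbrs a).
Proof. by rewrite /letter_nbrs; case: ifP => // _; case: ifP => //= _; rewrite inE; lia. Qed.

Lemma size_letter_nbrs a : size (letter_nbrs a) + (a == k.-1) = (a == 0) + 2 * (0 < a).
Proof.
rewrite /letter_nbrs.
by case: ifP => [/eqP->|a_neq0]; [|case: ifP => [/eqP->|a_neq_k1]] => /=; lia.
Qed.

Definition pell_nbr t u := [&& pell k u, size u == size t & pell_adj k t u].

Lemma pell_nbr_nil u : pell_nbr [::] u = false.
Proof. by rewrite /pell_nbr pell_adj_nil !andbF. Qed.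

Lemma pell_nbr_letter a s b s' : a < k -> pell k s ->
  pell_nbr (a :: s) (b :: s') =
  [|| (s' == s) && (b \in letter_nbrs a), pair_head k (a :: s) (b :: s')
    | (b == a) && pell_nbr s s'].
Proof.
move=> a_lt_k pell_s; rewrite /pell_nbr pell_adj_cons mem_letter_nbrs //.
rewrite -[size (b :: s') == _]/(size s' == size s).
have no_pair_down : pair_head k (b :: s') (a :: s) = false.
  by apply/pair_headP => -[r [_ [a_k _]]]; rewrite a_k ltnn in a_lt_k.
rewrite no_pair_down [s == s']eq_sym [a == b]eq_sym.
have [->|b_neq_a] := eqVneq b a.
  have no_pair_up : pair_head k (a :: s) (a :: s') = false.
    by apply/pair_headP => -[r [[a_k1 _] [a_k _]]]; lia.
  by rewrite letter_step_irr no_pair_up andbF /= a_lt_k.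
rewrite /= orbF; apply/idP/idP => [/and3P[] //|/orP[/andP[/eqP-> step]|]].
  have /and3P[_ _ b_lt_k] := step.
  by rewrite b_lt_k pell_s !eqxx step.
move=> /[dup] /pair_headP[r [[_ s_eq] [-> ->]]] ->.
by move: pell_s; rewrite s_eq /= ltn_predL (ltnW k_gt1) ltnn !eqxx orbT => ->.
Qed.

Lemma pell_nbr_kk s b d r : pell k s ->
  pell_nbr [:: k, k & s] [:: b, d & r] =
  ([:: b, d & r] == [:: k.-1, k.-1 & s]) || [&& b == k, d == k & pell_nbr s r].
Proof.
move=> pell_s; have k1_lt_k : k.-1 < k by rewrite ltn_predL (ltnW k_gt1).
have k_neq_k1 : (k == k.-1) = false by rewrite gtn_eqF.
have step_k x : letter_step k k x = false by rewrite /letter_step ltnn andbF.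
have no_pair_up x y : pair_head k (k :: x) y = false.
  by apply/pair_headP => -[? [[k_k1] _]]; lia.
rewrite /pell_nbr !pell_adj_cons !step_k !no_pair_up !andbF /=.
rewrite !eqSS; have [->|b_neq_k] := eqVneq b k.
  rewrite ltnn eqseq_cons k_neq_k1 no_pair_up /=.
  by have [->|_] := eqVneq d k; rewrite ?no_pair_up.
rewrite /= !orbF.
apply/idP/idP => [/and3P[_ _ /pair_headP[x [[-> -> ->] [->]]]]|/eqP[-> -> ->]].
  by rewrite eqxx.
by rewrite k1_lt_k pell_s !eqxx /pair_head !eqxx.
Qed.

Lemma mem_pell_nbrs t u : pell k t -> (u \in pell_nbrs t) = pell_nbr t u.
Proof.
move=> pell_t; move: t pell_t u; apply: pell_ind => [|a s a_lt_k pell_s IH|s pell_s IH] u.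
- by rewrite pell_nbr_nil.
- rewrite pell_nbrs_letter // !mem_cat mem_pair_up; case: u => [|b s'].
    have -> : pell_nbr (a :: s) [::] = false by [].
    by apply/negbTE/negP => /or3P[/mapP[] | /pair_headP[? []] | /mapP[]].
  by rewrite pell_nbr_letter // mem_map_cons_tail mem_map_cons IH.
- rewrite pell_nbrs_kk in_cons; case: u => [|b [|d r]].
  + have -> : pell_nbr [:: k, k & s] [::] = false by [].
    by apply/negbTE/negP => /orP[/eqP|/mapP[]].
  + have -> : pell_nbr [:: k, k & s] [:: b] = false by rewrite /pell_nbr; case: pell.
    by rewrite mem_map_cons; apply/negbTE/negP => /orP[/eqP|/andP[_ /mapP[]]].
  + by rewrite !mem_map_cons pell_nbr_kk // IH.
Qed.

Lemma pell_nbrs_uniq t : pell k t -> uniq (pell_nbrs t).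
Proof.
have cons_inj x : injective (@cons nat x) by move=> ? ? [].
move: t; apply: pell_ind => [|a s a_lt_k _ IH|s _ IH] //.
  rewrite pell_nbrs_letter // !cat_uniq map_inj_uniq => [|? ? []] //.
  rewrite letter_nbrs_uniq map_inj_uniq // IH andbT andTb; apply/and3P; split.
  - apply/hasPn => u; rewrite mem_cat mem_pair_up.
    case/orP => [/pair_headP[r [_ ->]]|/mapP[w _ ->]].
      by rewrite mem_map_cons_tail mem_letter_nbrs // /letter_step ltnn !andbF.
    by rewrite mem_map_cons_tail mem_letter_nbrs // letter_step_irr andbF.
  - by case: s {IH} => [|c r] //=; case: ifP.
  - apply/hasPn => _ /mapP[w _ ->]; rewrite mem_pair_up.
    by apply/pair_headP => -[r [_ [a_k _]]]; rewrite a_k ltnn in a_lt_k.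
have k1_neq_k : (k.-1 == k) = false by lia.
by rewrite pell_nbrs_kk cons_uniq mem_map_cons k1_neq_k !map_inj_uniq.
Qed.

Lemma size_pell_nbrs t : pell k t ->
  size (pell_nbrs t) + runs_of k.-1 t =
  count_mem 0 t + 2 * (\sum_(1 <= i < k) count_mem i t) + (count_mem k t)./2.
Proof.
move: t; apply: pell_ind => [|a s a_lt_k _ IH|s _ IH].
- by rewrite big1.
- have runs := runs_of_cons k.-1 a s; have letters := size_letter_nbrs a.
  rewrite pell_nbrs_letter // !size_cat size_map size_pair_up size_map sum_count_mem_cons /=.
  rewrite a_lt_k andbT (ltn_eqF a_lt_k) add0n -addnA (addnAC (nat_of_bool _)) addnC.
  rewrite [_ + runs_of _ _]addnC runs -(addnA (nat_of_bool _)) (addnC (runs_of _ _)) IH.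
  by rewrite addnC addnA letters addnA mulnDr addnACA.
- have k_neq_k1 : (k == k.-1) = false by lia.
  have runs_k x : runs_of k.-1 (k :: x) = runs_of k.-1 x.
    by have := runs_of_cons k.-1 k x; rewrite k_neq_k1 /= addn0.
  rewrite pell_nbrs_kk !sum_count_mem_cons ltnn andbF /= !size_map !runs_k.
  by rewrite (gtn_eqF (ltnW k_gt1)) eqxx !add0n !add1n /= addnS -IH addSn.
Qed.

Lemma pell_degE n t :
  t \in pell_vertices n k -> pell_deg n k t = size (pell_nbrs t).
Proof.
rewrite mem_pell_vertices => /andP[pell_t /eqP size_t].
rewrite /pell_deg -size_filter; apply/perm_size/uniq_perm.
- exact/filter_uniq/pell_vertices_uniq.
- exact: pell_nbrs_uniq.
- move=> u; rewrite mem_filter mem_pell_vertices mem_pell_nbrs // /pell_nbr size_t.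
  by rewrite andbC -andbA.
Qed.

End Neighbours.

Theorem proposition5p4 (n k : nat) (t : seq nat) :
  1 <= n -> 3 <= k -> t \in pell_vertices n k ->
  ((pell_deg n k t)%:Z =
     ((count_mem 0 t + 2 * (\sum_(1 <= i < k) count_mem i t)
        + (count_mem k t)./2)%N)%:Z - (runs_of k.-1 t)%:Z)%R.
Proof.
move=> _ /ltnW k_gt1 t_vertex.
have /andP[pell_t _] : pell k t && (size t == n) by rewrite -mem_pell_vertices.
by rewrite pell_degE // -size_pell_nbrs // PoszD addrK.
Qed.
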